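(* Let $m\in\mathbb{N}$, $r\ge0$, and let $\lambda$ be a nonzero real number. For all integers $l,n\ge0$, \[ D^{(r)}_{m,\lambda}(l+n,x)=\sum_{j=0}^{l}\sum_{k=0}^{n}\binom{n}{k}W^{(r)}_{m,\lambda}(l,j)\,x^{j}\,(mj-l\lambda)_{n-k,\lambda}\,D^{(r)}_{m,\lambda}(k,x) \] as polynomials in $x$; equivalently, with $a^{+}$ the boson creation operator, \[ D^{(r)}_{m,\lambda}(l+n,m a^{+})=\sum_{j=0}^{l}\sum_{k=0}^{n}\binom{n}{k}W^{(r)}_{m,\lambda}(l,j)\,m^{j}(a^{+})^{j}(mj-l\lambda)_{n-k,\lambda}D^{(r)}_{m,\lambda}(k,m a^{+}). \]
   Context: $(x)_{0,\lambda}=1$ and $(x)_{n,\lambda}=x(x-\lambda)\cdots(x-(n-1)\lambda)$ for $n\ge1$; $(x)_k=x(x-1)\cdots(x-k+1)$. For $m\in\mathbb{N}$ and $r\ge0$, the degenerate $r$-Whitney numbers of the second kind $W^{(r)}_{m,\lambda}(n,k)$ are defined by $(mx+r)_{n,\lambda}=\sum_{k=0}^{n}W^{(r)}_{m,\lambda}(n,k)m^{k}(x)_k$ ($n\ge0$), and the degenerate $r$-Dowling polynomials are $D^{(r)}_{m,\lambda}(n,x)=\sum_{k=0}^{n}W^{(r)}_{m,\lambda}(n,k)x^{k}$. *)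

From HB Require Import structures.
From mathcomp Require Import all_boot all_order all_algebra.
Set Implicit Arguments. Unset Strict Implicit. Unset Printing Implicit Defensive.
Import Order.TTheory GRing.Theory Num.Theory.
Local Open Scope ring_scope.

Definition dfall {R : nzRingType} (lam x : R) (n : nat) : R :=
  \prod_(i < n) (x - i%:R * lam).

Definition fall {R : nzRingType} (x : R) (k : nat) : R :=
  \prod_(i < k) (x - i%:R).

Definition is_deg_r_whitney2 {R : nzRingType} (m : nat) (r lam : R)
    (W : nat -> nat -> R) : Prop :=
  forall (n : nat) (x : R),
    dfall lam (m%:R * x + r) n = \sum_(k < n.+1) W n k * (m%:R) ^+ k * fall x k.

Definition deg_r_dowling {R : nzRingType} (W : nat -> nat -> R) (n : nat) : {poly R} :=
  \sum_(k < n.+1) W n k *: 'X^k.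

(* Let U_y be the linear functional on polynomials sending x^t to m^t (y)_t.
   The Whitney relation says exactly that U_y(D_n) = (m y + r)_{n,lam}, and
   U_y(x^j p) = m^j (y)_j U_{y-j}(p).  As m > 0, the values of U_y(p) at
   y = 0, 1, 2, ... determine the coefficients of p one by one, so it suffices
   to compare U_y of both sides.  There the identity becomes
   (m y + r)_{l+n,lam} = (m y + r)_{l,lam} (m y + r - l lam)_{n,lam}: the first
   factor is expanded by the Whitney relation, and the second, after writing
   m y + r - l lam = (m (y - j) + r) + (j m - l lam), by the Vandermonde formula
   for degenerate falling factorials. *)

From HB Require Import structures.
From mathcomp Require Import all_boot all_order all_algebra.
From mathcomp Require Import ring.
Set Implicit Arguments. Unset Strict Implicit. Unset Printing Implicit Defensive.
Import Order.TTheory GRing.Theory Num.Theory.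
Local Open Scope ring_scope.

Section FallingFactorials.
Variable R : comNzRingType.
Implicit Types (lam x : R) (n k : nat).

Lemma fallD x j k : fall x (j + k) = fall x j * fall (x - j%:R) k.
Proof.
rewrite /fall big_split_ord /=; congr (_ * _); apply: eq_bigr => i _.
by rewrite natrD opprD addrA.
Qed.

Lemma dfallD lam x j k :
  dfall lam x (j + k) = dfall lam x j * dfall lam (x - j%:R * lam) k.
Proof.
rewrite /dfall big_split_ord /=; congr (_ * _); apply: eq_bigr => i _.
by rewrite natrD mulrDl opprD addrA.
Qed.

Lemma dfallS lam x n : dfall lam x n.+1 = dfall lam x n * (x - n%:R * lam).
Proof. by rewrite /dfall big_ord_recr. Qed.

Lemma dfall_vandermonde lam x y n :
  dfall lam (x + y) n =
  \sum_(k < n.+1) 'C(n, k)%:R * dfall lam x k * dfall lam y (n - k).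
Proof.
elim: n => [|n IHn]; first by rewrite big_ord1 /dfall !big_ord0 !mulr1.
rewrite dfallS IHn mulr_suml.
have split_factor (k : 'I_n.+1) :
    'C(n, k)%:R * dfall lam x k * dfall lam y (n - k) * (x + y - n%:R * lam) =
    'C(n, k)%:R * dfall lam x k.+1 * dfall lam y (n - k) +
    'C(n, k)%:R * dfall lam x k * dfall lam y (n.+1 - k).
  have le_k_n : (k <= n)%N by rewrite -ltnS.
  (* x + y - n lam = (x - k lam) + (y - (n - k) lam) *)
  by rewrite subSn // !dfallS natrB //; ring.
under eq_bigr => k _ do rewrite split_factor.
rewrite big_split /= [RHS]big_ord_recl /=.
under [in RHS]eq_bigr => i _ do rewrite /bump leq0n add1n binS natrD !mulrDl.
rewrite big_split /= addrA [RHS]addrC; congr (_ + _).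
rewrite big_ord_recl [X in _ = _ + X]big_ord_recr /= (bin_small (ltnSn n)).
by rewrite mulr0n !mul0r addr0 !bin0.
Qed.

Lemma fall_nat_small (t u : nat) : (t < u)%N -> fall (t%:R : R) u = 0.
Proof. by move=> lt_t_u; rewrite /fall (bigD1 (Ordinal lt_t_u)) //= subrr mul0r. Qed.

End FallingFactorials.

Section Umbral.
Variables (R : comNzRingType) (m : nat) (y : R).
Implicit Types (p q : {poly R}).

Definition umbral p : R := \sum_(t < size p) p`_t * m%:R ^+ t * fall y t.

Lemma umbral_wide N p :
  (size p <= N)%N -> umbral p = \sum_(t < N) p`_t * m%:R ^+ t * fall y t.
Proof.
move=> le_p_N; rewrite /umbral.
rewrite (big_ord_widen N (fun t => p`_t * m%:R ^+ t * fall y t)) // big_mkcond.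
by apply: eq_bigr => t _; case: ltnP => // le_p_t; rewrite nth_default ?mul0r.
Qed.

Fact umbral0 : umbral 0 = 0.
Proof. by rewrite /umbral size_poly0 big_ord0. Qed.

Fact umbralD p q : umbral (p + q) = umbral p + umbral q.
Proof.
set N := maxn (size p) (size q).
rewrite !(@umbral_wide N) ?leq_maxl ?leq_maxr ?size_polyD // -big_split /=.
by apply: eq_bigr => t _; rewrite coefD !mulrDl.
Qed.

HB.instance Definition _ :=
  GRing.isNmodMorphism.Build {poly R} R umbral (umbral0, umbralD).

Lemma umbralZ a p : umbral (a *: p) = a * umbral p.
Proof.
rewrite !(@umbral_wide (size p)) ?size_scale_leq // mulr_sumr.
by apply: eq_bigr => t _; rewrite coefZ !mulrA.
Qed.

End Umbral.

Section UmbralTheory.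
Variables (R : comNzRingType) (m : nat).

Lemma umbral_XnM (y : R) j q :
  umbral m y ('X^j * q) = m%:R ^+ j * fall y j * umbral m (y - j%:R) q.
Proof.
have size_XnM : (size ('X^j * q)%R <= j + size q)%N.
  by rewrite (leq_trans (size_polyMleq 'X^j q)) // size_polyXn.
rewrite (umbral_wide _ _ size_XnM) big_split_ord /= big1 ?add0r; last first.
  by move=> i _; rewrite coefXnM ltn_ord !mul0r.
rewrite /umbral mulr_sumr; apply: eq_bigr => i _.
by rewrite coefXnM ltnNge leq_addr /= addKn exprD fallD; ring.
Qed.

Lemma umbral_dowling (r lam : R) W (y : R) n :
  is_deg_r_whitney2 m r lam W ->
  umbral m y (deg_r_dowling W n) = dfall lam (m%:R * y + r) n.
Proof.
move=> whitneyW; rewrite whitneyW /deg_r_dowling -poly_def.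
rewrite (umbral_wide _ _ (size_poly _ _)).
by apply: eq_bigr => t _; rewrite coef_poly ltn_ord.
Qed.

End UmbralTheory.

Lemma fall_nat_neq0 (R : numDomainType) (t : nat) : fall (t%:R : R) t != 0.
Proof.
apply/prodf_neq0 => i _.
by rewrite -natrB ?pnatr_eq0 ?subn_eq0 -?ltnNge // ltnW.
Qed.

Lemma umbral_inj (R : numDomainType) (m : nat) (p q : {poly R}) :
  (0 < m)%N -> (forall y, umbral m y p = umbral m y q) -> p = q.
Proof.
move=> m_gt0 eq_pq; apply/eqP; rewrite -subr_eq0; apply/eqP.
set d := p - q; have umbral_d0 y : umbral m y d = 0.
  by rewrite raddfB /= eq_pq subrr.
apply/polyP => t; rewrite coef0.
case: (ltnP t (size d)) => [|le_d_t]; last by rewrite nth_default.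
(* At y = t the terms of index above t vanish, those below by induction. *)
elim/ltn_ind: t => t IHt lt_t_d.
have := umbral_d0 t%:R; rewrite /umbral (bigD1 (Ordinal lt_t_d)) //= big1 ?addr0.
  move/eqP; rewrite !mulf_eq0 (negbTE (fall_nat_neq0 _ _)) expf_eq0 pnatr_eq0.
  by rewrite eqn0Ngt m_gt0 andbF !orbF => /eqP.
move=> i ne_i_t; case: (ltngtP i t) => [lt_i_t|lt_t_i|eq_i_t].
- by rewrite IHt ?mul0r // (ltn_trans lt_i_t).
- by rewrite fall_nat_small ?mulr0.
- by move: ne_i_t; rewrite -val_eqE /= eq_i_t eqxx.
Qed.

Theorem theorem3p2 (R : realFieldType) (m : nat) (r lam : R)
    (W : nat -> nat -> R) :
  (0 < m)%N -> 0 <= r -> lam != 0 ->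
  is_deg_r_whitney2 m r lam W ->
  forall l n : nat,
    deg_r_dowling W (l + n) =
    \sum_(j < l.+1) \sum_(k < n.+1)
       ('C(n, k)%:R * W l j * dfall lam (j%:R * m%:R - l%:R * lam) (n - k))
         *: ('X^j * deg_r_dowling W k).
Proof.
move=> m_gt0 _ _ whitneyW l n; apply: (umbral_inj m_gt0) => y.
rewrite (umbral_dowling _ _ whitneyW) dfallD whitneyW mulr_suml raddf_sum.
apply: eq_bigr => j _; rewrite raddf_sum.
have -> : m%:R * y + r - l%:R * lam =
   (m%:R * (y - j%:R) + r) + (j%:R * m%:R - l%:R * lam) by ring.
rewrite dfall_vandermonde mulr_sumr; apply: eq_bigr => k _.
rewrite /= umbralZ umbral_XnM (umbral_dowling _ _ whitneyW); ring.
Qed.
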